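(* Assume $\Gamma^{orb}$ is a bamboo with nodes $n_1,\dots,n_k$ in order along it. Let $\alpha\in\mathbb R_{\ge0}\langle\mathfrak v_1,\dots,\mathfrak v_k\rangle\cap\mathbb Z\langle\pi_{\mathcal N}(E_v^* )\rangle_{v\in\mathcal V}$, let $\lambda_1,\lambda_k>0$, and let $$\varphi(\mathbf t_{\mathcal N})=\frac{\mathbf t_{\mathcal N}^{\alpha}}{(1-\mathbf t_{\mathcal N}^{\lambda_1\mathfrak v_1})(1-\mathbf t_{\mathcal N}^{\lambda_k\mathfrak v_k})}.$$ Let $\varphi=\varphi^++\varphi^{neg}$ be the unique decomposition where $\varphi^+$ is a finite sum of monomials with exponents $\beta\not<0$ and $\varphi^{neg}=R/((1-\mathbf t_{\mathcal N}^{\lambda_1\mathfrak v_1})(1-\mathbf t_{\mathcal N}^{\lambda_k\mathfrak v_k}))$ has negative degree in every $t_n$. Then every exponent $\beta$ of a monomial of $\varphi^+$ (with nonzero coefficient) satisfies $\mathfrak s(\beta)=1$.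
   Context: $\Gamma$ is a connected negative definite plumbing graph which is a tree with all genera $0$; $\mathcal V$ vertices, $\delta_v$ valencies, $\mathcal N=\{v:\delta_v\ge3\}$ the nodes. $L=\bigoplus\mathbb ZE_v$ with the intersection form, $E_v^*\in L\otimes\mathbb Q$ defined by $(E^*_v,E_w)=-\delta_{vw}$. $\pi_{\mathcal N}$ is the projection of $L\otimes\mathbb R$ onto $\bigoplus_{n\in\mathcal N}\mathbb R E_n$ forgetting non-node coordinates; $\mathfrak v_i:=\pi_{\mathcal N}(E^*_{n_i})=\sum_{\ell}-(E^*_{n_i},E^*_{n_\ell})E_{n_\ell}$, which has all coordinates positive. For $x=\sum_n x_nE_n$ put $\mathbf t_{\mathcal N}^x=\prod_n t_n^{x_n}$. $\beta<0$ means all coordinates negative; $\beta\not<0$ otherwise. A rational function $R/D$, $D=(1-\mathbf t_{\mathcal N}^{\lambda_1\mathfrak v_1})(1-\mathbf t_{\mathcal N}^{\lambda_k\mathfrak v_k})$, has negative degree in $t_n$ if each monomial of $R$ has $t_n$-exponent smaller than that of $\mathbf t_{\mathcal N}^{\lambda_1\mathfrak v_1+\lambda_k\mathfrak v_k}$. Orbifold graph $\Gamma^{orb}$: vertex set $\mathcal N$, $n,n'$ adjacent iff the path between them in $\Gamma$ has only valency-$2$ interior vertices; it is a bamboo if it has no vertex of valency $\ge3$. Multiplicity: choose $n_0\in\mathcal N$, orient the edges of $\Gamma^{orb}$ toward $n_0$, write $n>n'$ if an edge is oriented from $n$ to $n'$; $\mathfrak s_n(\beta)=1$ if $\beta_n\ge0$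 and $0$ otherwise; $\mathfrak s_{n>n'}(\beta)=1$ if $\beta_n\ge0$ and $\beta_{n'}<0$ and $0$ otherwise; $\mathfrak s(\beta)=\mathfrak s_{n_0}(\beta)+\sum_{n>n'}\mathfrak s_{n>n'}(\beta)$ (independent of $n_0$). *)

From HB Require Import structures.
From mathcomp Require Import all_boot all_order all_algebra.
Set Implicit Arguments. Unset Strict Implicit. Unset Printing Implicit Defensive.
Import Order.TTheory GRing.Theory Num.Theory.
Local Open Scope ring_scope.

(* Vertices of Gamma are 'I_m; adjacency is a relation e : rel 'I_m;
   Euler numbers (self-intersections) are b : 'I_m -> int; all genera are 0. *)

Definition valency (m : nat) (e : rel 'I_m) (v : 'I_m) : nat :=
  #|[pred w | e v w]|.

(* simple graph which is a tree: symmetric, irreflexive, connected,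
   with |edges| = |V| - 1 (each edge counted twice as ordered pair) *)
Definition is_tree (m : nat) (e : rel 'I_m) : Prop :=
  [/\ symmetric e, irreflexive e, (forall v w, connect e v w) &
      #|[pred p : 'I_m * 'I_m | e p.1 p.2]| = (2 * m.-1)%N].

Definition inter_mx (R : realFieldType) (m : nat) (e : rel 'I_m)
  (b : 'I_m -> int) : 'M[R]_m :=
  \matrix_(i, j) (if i == j then (b i)%:~R else if e i j then 1 else 0).

Definition neg_def (R : realFieldType) (m : nat) (M : 'M[R]_m) : Prop :=
  forall x : 'rV[R]_m, x != 0 -> (x *m M *m x^T) 0 0 < 0.

(* coordinates of E*_v: (E*_v, E_w) = - delta_{vw}, i.e. E*_v *m I = - e_v *)
Definition Estar (R : realFieldType) (m : nat) (e : rel 'I_m)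
  (b : 'I_m -> int) (v : 'I_m) : 'rV[R]_m :=
  - (delta_mx 0 v *m invmx (inter_mx R e b)).

Definition projN (R : realFieldType) (m k : nat) (node : 'I_k -> 'I_m)
  (x : 'rV[R]_m) : 'rV[R]_k := \row_i x 0 (node i).

Definition vfrak (R : realFieldType) (m k : nat) (e : rel 'I_m)
  (b : 'I_m -> int) (node : 'I_k -> 'I_m) (i : 'I_k) : 'rV[R]_k :=
  projN node (Estar R e b (node i)).

(* adjacency in the orbifold graph: the (unique) path in Gamma from n to n'
   has only valency-2 interior vertices *)
Definition orb_adj (m : nat) (e : rel 'I_m) (n n' : 'I_m) : Prop :=
  exists p : seq 'I_m,
    [&& path e n (rcons p n'), uniq (n :: rcons p n')
      & all (fun v => valency e v == 2%N) p].

(* a finite formal sum of monomials c * t^beta, beta in R^N *)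
Definition lpoly (R : realFieldType) (k : nat) := seq (int * 'rV[R]_k).

Definition lcoef (R : realFieldType) (k : nat) (p : lpoly R k)
  (beta : 'rV[R]_k) : int :=
  \sum_(a <- p | a.2 == beta) a.1.

Definition lmul (R : realFieldType) (k : nat) (p q : lpoly R k) : lpoly R k :=
  [seq (a.1 * c.1, a.2 + c.2) | a <- p, c <- q].

Definition lmono (R : realFieldType) (k : nat) (x : 'rV[R]_k) : lpoly R k :=
  [:: (1, x)].

Definition lden (R : realFieldType) (k : nat) (u w : 'rV[R]_k) : lpoly R k :=
  lmul [:: (1, 0); (-1, u)] [:: (1, 0); (-1, w)].

Definition negv (R : realFieldType) (k : nat) (beta : 'rV[R]_k) : bool :=
  [forall i, beta 0 i < 0].

(* phi = t^alpha / D decomposes as phip + Rp / D, where phip has only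
   exponents beta not< 0 and Rp has negative degree in every t_n, i.e.
   every monomial of Rp has t_n-exponent < that of t^{u+w}.
   The identity of rational functions is stated after clearing D. *)
Definition is_decomp (R : realFieldType) (k : nat) (alpha u w : 'rV[R]_k)
  (phip Rp : lpoly R k) : Prop :=
  [/\ (forall beta, lcoef phip beta != 0 -> ~~ negv beta),
      (forall beta, lcoef Rp beta != 0 -> forall i, beta 0 i < (u + w) 0 i) &
      (forall beta, lcoef (lmono alpha) beta
                    = lcoef (lmul phip (lden u w) ++ Rp) beta)].

(* nodes indexed 0..k; edges {i, i+1}; root j; edges oriented toward j. *)
Definition scoord (R : realFieldType) (k : nat) (beta : 'rV[R]_k.+1) (i : nat) : R :=
  beta 0 (inord i).

Definition smult (R : realFieldType) (k : nat) (beta : 'rV[R]_k.+1)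
  (j : 'I_k.+1) : nat :=
  addn (nat_of_bool (0 <= beta 0 j)%R)
  (\sum_(i < k)
     (if (i.+1 <= j)%N
      then nat_of_bool ((0 <= scoord beta i)%R && (scoord beta i.+1 < 0)%R)
      else nat_of_bool ((0 <= scoord beta i.+1)%R && (scoord beta i < 0)%R))).

From HB Require Import structures.
From mathcomp Require Import all_boot all_order all_algebra.
From mathcomp Require Import zify ring.
Set Implicit Arguments. Unset Strict Implicit. Unset Printing Implicit Defensive.
Import Order.TTheory GRing.Theory Num.Theory.

(* A monomial t^beta of phi^+ has beta = alpha - (a+1) l1 v_1 - (b+1) lk v_k
   for some a, b >= 0.  Indeed, comparing the coefficients of t^(beta + u + w),
   u = l1 v_1, w = lk v_k, in t^alpha = phi^+ D + R shows that either
   beta + u + w = alpha or one of t^(beta + u + w), t^(beta + u), t^(beta + w)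
   again occurs in phi^+: otherwise R would carry the coefficient of
   t^(beta + u + w), forcing beta < 0.  A descending induction on the total
   degree concludes.
   Consequently beta is the node part of X = sum_i c_i E*_(n_i) - A E*_(n_1)
   - B E*_(n_k), and (X, E_v) <= 0 at every vertex v except n_1 and n_k.  By
   the minimum principle for the negative definite intersection form, every
   connected region of Gamma on which X < 0 contains n_1 or n_k, so along the
   bamboo the nodes with beta_n >= 0 form an interval, nonempty as beta is not
   < 0.  For such beta, s(beta) counts exactly one of: the root lying in the
   interval, or the unique edge leaving the interval towards the root. *)

Ltac nat_cases := repeat match goal with
  | |- context[?a <= ?b] => case: (leqP a b) => ?
  | |- context[?a == ?b] => case: (eqVneq a b) => ?
  end; simpl; lia.

Lemma boundary_count_interval (k p q j0 : nat) (f : nat -> bool) :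
  p <= q <= k -> j0 <= k -> (forall x, x <= k -> f x = (p <= x <= q)) ->
  (f j0 + \sum_(i < k)
     (if i.+1 <= j0 then (f i && ~~ f i.+1 : nat)
      else (f i.+1 && ~~ f i : nat)))%N = 1%N.
Proof.
move=> /andP[pq qk] j0k fE.
have termE (i : 'I_k) : (if i.+1 <= j0 then (f i && ~~ f i.+1 : nat)
      else (f i.+1 && ~~ f i : nat))
    = ((if i == q :> nat then (q < j0 : nat) else 0)
       + (if i == p.-1 :> nat then ((0 < p) && (j0 < p) : nat) else 0))%N.
  have ik := ltn_ord i; rewrite !fE ?(ltnW ik) //.
  by nat_cases.
rewrite (eq_bigr _ (fun i _ => termE i)) big_split /= -!big_mkcond /=.
rewrite (big_ord1_eq _ (fun=> _) q) (big_ord1_eq _ (fun=> _) p.-1) fE //.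
by nat_cases.
Qed.

Lemma convex_interval (k : nat) (f : nat -> bool) :
  (exists i, (i <= k) && f i) ->
  (forall i j l, i < j < l -> l <= k -> f i -> f l -> f j) ->
  exists p q, p <= q <= k /\ forall x, x <= k -> f x = (p <= x <= q).
Proof.
move=> fex fconv.
have ub i : (i <= k) && f i -> i <= k by case/andP.
have [p /andP[pk fp] pmin] := ex_minnP fex.
have [q /andP[qk fq] qmax] := ex_maxnP fex ub.
exists p, q; split; first by rewrite qk pmin // qk fq.
move=> x xk; apply/idP/andP => [fx | [px xq]]; first by rewrite pmin ?qmax // xk fx.
have [<- //|p_x] := eqVneq p x; have [-> //|x_q] := eqVneq x q.
by apply: (fconv p x q) => //; lia.
Qed.

Lemma ltn_adjacent (i a b : nat) :
  i != a -> i != b -> (a.+1 == b) || (b.+1 == a) -> (i < a) = (i < b).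
Proof. by move=> ia ib; case/orP=> /eqP ab; lia. Qed.

Lemma sub_count_lt (T : Type) (a1 a2 : pred T) (s : seq T) :
  subpred a1 a2 -> has (fun z => a2 z && ~~ a1 z) s -> (count a1 s < count a2 s)%N.
Proof.
move=> sub12; elim: s => [//|z s IHs] /=.
case/orP=> [/andP[a2z na1]|has_s].
  by have := sub_count sub12 s; rewrite (negbTE na1) a2z /=; lia.
have : (a1 z <= a2 z)%N by case: (boolP (a1 z)) => [/sub12 ->|].
by have := IHs has_s; lia.
Qed.

Local Open Scope ring_scope.

Definition nonneg_convex (R : realFieldType) (n : nat) (f : 'I_n -> R) : Prop :=
  forall i j l : 'I_n, (i < j < l)%N -> 0 <= f i -> 0 <= f l -> 0 <= f j.

Lemma smult_convex (R : realFieldType) (k : nat) (beta : 'rV[R]_k.+1) (n0 : 'I_k.+1) :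
  ~~ negv beta -> nonneg_convex (beta 0) -> smult beta n0 = 1%N.
Proof.
rewrite /negv negb_forall => /existsP[i0 beta_i0] beta_conv.
pose f x := 0 <= scoord beta x.
have fE (x : 'I_k.+1) : f x = (0 <= beta 0 x) by rewrite /f /scoord inord_val.
have [||p [q [pqk f_pq]]] := @convex_interval k f.
- by exists i0; rewrite -ltnS ltn_ord fE leNgt beta_i0.
- move=> i j l /andP[ij jl] lk; have jk : (j < k.+1)%N by apply: ltn_trans jl _.
  have ik : (i < k.+1)%N by apply: ltn_trans ij _.
  rewrite /f /scoord; apply: (beta_conv (inord i) (inord j) (inord l)).
  by rewrite !inordK // ij jl.
- have n0k : (n0 <= k)%N by rewrite -ltnS.
  rewrite /smult -fE -(boundary_count_interval pqk n0k f_pq).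
  by congr addn; apply: eq_bigr => i _; rewrite /f !ltNge.
Qed.

Section LaurentDecomposition.
Variables (R : realFieldType) (k : nat).
Implicit Types (p q : lpoly R k) (x u w : 'rV[R]_k).

Lemma lcoef_cat p q x : lcoef (p ++ q) x = lcoef p x + lcoef q x.
Proof. by rewrite /lcoef big_cat. Qed.

Lemma lcoef_lmono a x : lcoef (lmono a) x = (x == a)%:R.
Proof. by rewrite /lcoef /lmono big_cons big_nil addr0 /= eq_sym; case: eqP. Qed.

Lemma lcoef_neq0_has p x : lcoef p x != 0 -> has (fun c => c.2 == x) p.
Proof. by apply: contraR => no_x; rewrite /lcoef big_hasC. Qed.

Lemma lcoef_lmul p q x :
  lcoef (lmul p q) x = \sum_(c <- q) c.1 * lcoef p (x - c.2).
Proof.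
rewrite /lcoef /lmul big_mkcond big_allpairs_dep /= exchange_big /=.
apply: eq_bigr => c _; rewrite big_distrr /= [RHS]big_mkcond /=.
apply: eq_bigr => a _; rewrite [a.2 == _]eq_sym subr_eq eq_sym.
by case: ifP; rewrite ?mulr0 // mulrC.
Qed.

Lemma lcoef_lmul_lden p u w x :
  lcoef (lmul p (lden u w)) x =
  lcoef p x - lcoef p (x - w) - lcoef p (x - u) + lcoef p (x - (u + w)).
Proof.
rewrite lcoef_lmul /lden /lmul /= !big_cons big_nil /= !subr0 !add0r addr0 subr0.
ring.
Qed.

Lemma decomp_exponent_step alpha u w phip Rp g :
  is_decomp alpha u w phip Rp -> lcoef phip g != 0 ->
  [\/ g + u + w = alpha, lcoef phip (g + u + w) != 0,
      lcoef phip (g + u) != 0 | lcoef phip (g + w) != 0].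
Proof.
move=> [phip_nneg Rp_lt phi_id] g_exp; set x := g + u + w.
have [<-|x_alpha] := eqVneq x alpha; first exact: Or41.
have [Px0|_] := eqVneq (lcoef phip x) 0; last exact: Or42.
have [Pu0|_] := eqVneq (lcoef phip (g + u)) 0; last exact: Or43.
have [Pw0|_] := eqVneq (lcoef phip (g + w)) 0; last exact: Or44.
have xw : x - w = g + u by rewrite addrK.
have xu : x - u = g + w by rewrite /x addrAC addrK.
have xuw : x - (u + w) = g by rewrite /x -(addrA g) addrK.
have := phi_id x; rewrite lcoef_lmono (negbTE x_alpha) lcoef_cat lcoef_lmul_lden.
rewrite xw xu xuw Px0 Pu0 Pw0 !subr0 add0r => /eqP; rewrite eq_sym addr_eq0.
move=> /eqP Rp_x; have /Rp_lt x_small : lcoef Rp x != 0 by rewrite -[lcoef Rp x]opprK -Rp_x oppr_eq0.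
case/negP: (phip_nneg g g_exp); apply/forallP => i.
by have := x_small i; rewrite /x -addrA mxE gtrDr.
Qed.

Definition rsum x : R := \sum_i x 0 i.

Lemma rsumD x y : rsum (x + y) = rsum x + rsum y.
Proof. by rewrite /rsum -big_split; apply: eq_bigr => i _; rewrite mxE. Qed.

Lemma rsumZ a x : rsum (a *: x) = a * rsum x.
Proof. by rewrite /rsum mulr_sumr; apply: eq_bigr => i _; rewrite mxE. Qed.

Lemma decomp_exponent_shape alpha u w phip Rp :
  0 < rsum u -> 0 < rsum w -> is_decomp alpha u w phip Rp ->
  forall g, lcoef phip g != 0 ->
  exists a b : nat, g + a.+1%:R *: u + b.+1%:R *: w = alpha.
Proof.
(* Descending induction on rsum g, measured by the exponents of phip above it. *)
move=> u_gt0 w_gt0 dec.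
pose N g := count (fun c : int * 'rV[R]_k => rsum g < rsum c.2) phip.
have N_lt g g' : rsum g < rsum g' -> lcoef phip g' != 0 -> (N g' < N g)%N.
  move=> gg' /lcoef_neq0_has g'_in; apply: sub_count_lt => [c /(lt_trans gg')//|].
  by apply: sub_has g'_in => c /eqP ->; rewrite gg' ltxx.
suff shape n g : (N g < n)%N -> lcoef phip g != 0 ->
    exists a b : nat, g + a.+1%:R *: u + b.+1%:R *: w = alpha.
  by move=> g; apply: shape.
elim: n g => [//|n IHn] g Ng g_exp.
have IH g' : rsum g < rsum g' -> lcoef phip g' != 0 ->
    exists a b : nat, g' + a.+1%:R *: u + b.+1%:R *: w = alpha.
  move=> gg' g'_exp; have := N_lt _ _ gg' g'_exp.
  by move=> /leq_trans/(_ Ng) Ng'; apply: IHn g'_exp.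
have lt_u : rsum g < rsum (g + u) by rewrite rsumD ltrDl.
have lt_w : rsum g < rsum (g + w) by rewrite rsumD ltrDl.
have lt_uw : rsum g < rsum (g + u + w) by rewrite !rsumD -addrA ltrDl addr_gt0.
case: (decomp_exponent_step dec g_exp) => [<-|/(IH _ lt_uw)|/(IH _ lt_u)|/(IH _ lt_w)].
- by exists 0%N, 0%N; rewrite !scale1r.
- by case=> a [b <-]; exists a.+1, b.+1; apply/matrixP => i j; rewrite !mxE !mulrS; ring.
- by case=> a [b <-]; exists a.+1, b; apply/matrixP => i j; rewrite !mxE !mulrS; ring.
- by case=> a [b <-]; exists a, b.+1; apply/matrixP => i j; rewrite !mxE !mulrS; ring.
Qed.

End LaurentDecomposition.

Section IntersectionForm.
Variables (R : realFieldType) (m : nat) (e : rel 'I_m) (b : 'I_m -> int).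
Hypothesis negdef : neg_def (inter_mx R e b).
Notation M := (inter_mx R e b).

Lemma inter_mx_unit : M \in unitmx.
Proof.
rewrite unitmxE unitfE; apply/negP => /det0P[v v_neq0 vM].
by have := negdef v_neq0; rewrite vM mul0mx mxE ltxx.
Qed.

Lemma Estar_mulmx v : Estar R e b v *m M = - delta_mx 0 v.
Proof. by rewrite /Estar mulNmx -mulmxA mulVmx ?inter_mx_unit // mulmx1. Qed.

Lemma min_principle (X : 'rV[R]_m) (C : {set 'I_m}) :
  {in C, forall v, X 0 v < 0} ->
  {in C, forall v, (X *m M) 0 v <= 0} ->
  (forall v w, w \in C -> v \notin C -> e v w -> 0 <= X 0 v) ->
  C = set0.
Proof.
(* With Y the restriction of X to C, each term of Y M Y^T is >= 0: bound the
   diagonal through X M <= 0 on C; the edges leaving C have the right sign. *)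
move=> X_neg XM_le0 X_bd; apply/eqP; apply: contraT => /set0Pn[v0 v0C].
pose Y : 'rV[R]_m := \row_v (if v \in C then X 0 v else 0).
have Y_neq0 : Y != 0.
  apply/eqP => /matrixP/(_ 0 v0); rewrite !mxE v0C => Xv0.
  by have := X_neg _ v0C; rewrite Xv0 ltxx.
suff : 0 <= (Y *m M *m Y^T) 0 0 by rewrite leNgt negdef.
rewrite mxE; apply: sumr_ge0 => w _; rewrite !mxE.
have [wC|] := boolP (w \in C); last by rewrite mulr0.
apply: mulr_le0; last exact: ltW (X_neg _ wC).
apply: le_trans (XM_le0 _ wC); rewrite !mxE; apply: ler_sum => v _.
rewrite !mxE; have [vC|vC] := boolP (v \in C); first by [].
have /negbTE-> : v != w by apply: contraNneq vC => ->.
rewrite mul0r /=; case: ifP => [evw|]; last by rewrite mulr0.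
by rewrite mulr1 (X_bd v w wC vC evw).
Qed.

Lemma Estar_ge0 v w : 0 <= Estar R e b v 0 w.
Proof.
have neg_set0 : [set z | Estar R e b v 0 z < 0] = set0.
  apply: (min_principle (X := Estar R e b v)) => [z|z _|z z' _].
  - by rewrite inE.
  - by rewrite Estar_mulmx !mxE oppr_le0; case: (_ && _).
  - by rewrite inE -leNgt.
by have /setP/(_ w) := neg_set0; rewrite !inE ltNge => /negbFE.
Qed.

Lemma Estar_diag_gt0 v : 0 < Estar R e b v 0 v.
Proof.
have Estar_neq0 : Estar R e b v != 0.
  apply/eqP => E0; have := Estar_mulmx v; rewrite E0 mul0mx.
  move/matrixP/(_ 0 v); rewrite !mxE !eqxx /= => /eqP.
  by rewrite eq_sym oppr_eq0 oner_eq0.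
by have := negdef Estar_neq0; rewrite Estar_mulmx mulNmx -rowE !mxE oppr_lt0.
Qed.

End IntersectionForm.

Lemma path_valency_ge2 (m : nat) (e : rel 'I_m) x s :
  symmetric e -> path e x s -> uniq (x :: s) ->
  {in s, forall v, v != last x s -> (2 <= valency e v)%N}.
Proof.
move=> e_sym; elim: s x => [//|y s IHs] x /= /andP[exy ys] /andP[x_ys ys_uniq] v.
rewrite inE => /predU1P[-> | vs] v_last; last exact: (IHs y ys ys_uniq v vs v_last).
case: s ys ys_uniq x_ys v_last {IHs} => [|z s] /=; first by rewrite eqxx.
case/andP=> eyz _ _; rewrite !inE negb_or => /andP[_ /norP[xz _]] _.
rewrite /valency; apply: leq_trans (subset_leq_card (_ : [set x; z] \subset _)).
  by rewrite cards2 xz.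
by apply/subsetP => u; rewrite !inE => /pred2P[]->; rewrite // e_sym.
Qed.

Section Bamboo.
Variables (m k : nat) (e : rel 'I_m) (node : 'I_k.+1 -> 'I_m).
Hypothesis e_sym : symmetric e.
Hypothesis node_inj : injective node.
Hypothesis nodeP : forall v, (3 <= valency e v)%N <-> exists i, node i = v.
Hypothesis bambooP : forall i j : 'I_k.+1,
  orb_adj e (node i) (node j) <-> (i.+1 == j :> nat) || (j.+1 == i :> nat).

Definition is_node v := [exists i, node i == v].

Lemma orb_adj_first_node a c q :
  path e (node a) (rcons q (node c)) -> uniq (node a :: rcons q (node c)) ->
  ~~ has is_node q -> orb_adj e (node a) (node c).
Proof.
move=> aqc_path aqc_uniq q_nodes; exists q; rewrite aqc_path aqc_uniq /=.
apply/allP => v vq; have v_node : ~~ is_node v by apply: contra q_nodes => ?; apply/hasP; exists v.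
have v2 : (2 <= valency e v)%N.
  apply: (path_valency_ge2 e_sym aqc_path aqc_uniq); first by rewrite mem_rcons inE vq orbT.
  by rewrite last_rcons; apply: contraNneq v_node => ->; apply/existsP; exists c.
have v3 : ~ (3 <= valency e v)%N.
  by move=> /nodeP[j vj]; case/existsP: v_node; exists j; rewrite vj.
by apply/eqP; lia.
Qed.

Lemma bamboo_path_side p a c i :
  path e (node a) p -> uniq (node a :: p) -> last (node a) p = node c ->
  node i \notin node a :: p -> (i < a)%N = (i < c)%N.
Proof.
have [n] := ubnP (size p); elim: n p a => [//|n IHn] [|y0 p0] a size_p ap_path ap_uniq ap_last i_notin.
  by move: ap_last => /= /node_inj ->.
set p := y0 :: p0 in size_p ap_path ap_uniq ap_last i_notin.
have p_node : has is_node p.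
  by apply/hasP; exists (node c); [rewrite -ap_last /= mem_last | apply/existsP; exists c].
move: size_p ap_path ap_uniq ap_last i_notin.
case: (split_find_nth (node a) p_node) => y q r /existsP[bb /eqP ybb] q_nodes.
rewrite -{}ybb => size_p ap_path ap_uniq ap_last i_notin.
have aq_path : path e (node a) (rcons q (node bb)) by move: ap_path; rewrite cat_path => /andP[].
have aq_uniq : uniq (node a :: rcons q (node bb)).
  by apply: subseq_uniq ap_uniq; apply: prefix_subseq.
have /bambooP ab := orb_adj_first_node aq_path aq_uniq q_nodes.
have br_path : path e (node bb) r by move: ap_path; rewrite cat_path last_rcons => /andP[].
have br_uniq : uniq (node bb :: r).
  by move: ap_uniq; rewrite cat_rcons /= cat_uniq => /andP[_ /and3P[]].
have br_last : last (node bb) r = node c by move: ap_last; rewrite last_cat last_rcons.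
have i_notin_br : node i \notin node bb :: r.
  by apply: contra i_notin; rewrite cat_rcons !inE mem_cat inE => /orP[]->; rewrite !orbT.
have size_r : (size r < n)%N.
  by move: size_p; rewrite size_cat size_rcons addSn ltnS; apply: leq_ltn_trans; rewrite leq_addl.
have ia : i != a :> nat by apply: contraNneq i_notin => /val_inj ->; rewrite mem_head.
have ib : i != bb :> nat.
  by apply: contraNneq i_notin => /val_inj ->; rewrite cat_rcons !inE mem_cat inE eqxx !orbT.
by rewrite -(IHn r bb size_r br_path br_uniq br_last i_notin_br) (ltn_adjacent ia ib ab).
Qed.

Lemma bamboo_connect_side (Q : pred 'I_m) a c i :
  connect (fun x y => [&& e x y, Q x & Q y]) (node a) (node c) ->
  Q (node a) -> ~~ Q (node i) -> (i < a)%N = (i < c)%N.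
Proof.
set r := fun x y => [&& e x y, Q x & Q y].
have Q_closed : closed r Q by move=> x y /and3P[_ Qx Qy]; rewrite !unfold_in Qx Qy.
move=> /connectP[p0 p0_path p0_last] Qa nQi.
case: (shortenP p0_path) p0_last => p p_path p_uniq _ p_last.
apply: (bamboo_path_side _ p_uniq (esym p_last)).
  by apply: sub_path p_path => x y /and3P[].
apply: contra nQi => /(path_connect p_path) ac.
by rewrite -[Q _]/(node i \in Q) -(closed_connect Q_closed ac).
Qed.

End Bamboo.

Lemma comb_entry (R : pzRingType) (p : nat) (x y z : 'rV[R]_p) (A B : R) j :
  (x - A *: y - B *: z) 0 j = x 0 j - A * y 0 j - B * z 0 j.
Proof. by rewrite !mxE. Qed.

Lemma sum_scale_entry (R : pzRingType) (n p : nat) (c : 'I_n -> R) (V : 'I_n -> 'rV[R]_p) j :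
  (\sum_i c i *: V i) 0 j = \sum_i c i * V i 0 j.
Proof. by rewrite summxE; apply: eq_bigr => i _; rewrite mxE. Qed.

Section BambooExponents.
Variables (R : realFieldType) (m k : nat) (e : rel 'I_m) (b : 'I_m -> int).
Variable node : 'I_k.+1 -> 'I_m.
Hypothesis negdef : neg_def (inter_mx R e b).
Hypothesis e_sym : symmetric e.
Hypothesis node_inj : injective node.
Hypothesis nodeP : forall v, (3 <= valency e v)%N <-> exists i, node i = v.
Hypothesis bambooP : forall i j : 'I_k.+1,
  orb_adj e (node i) (node j) <-> (i.+1 == j :> nat) || (j.+1 == i :> nat).

Lemma nonneg_convex_nodes (X : 'rV[R]_m) :
  (forall v, v != node ord0 -> v != node ord_max -> (X *m inter_mx R e b) 0 v <= 0) ->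
  nonneg_convex (fun i => X 0 (node i)).
Proof.
(* The component C of {X < 0} around n_j can reach neither end node without
   crossing n_i or n_l, so the minimum principle empties it. *)
move=> XM_le0 i j l /andP[ij jl] Xi Xl; rewrite leNgt; apply/negP => Xj.
pose Q := [pred v | X 0 v < 0]; pose r x y := [&& e x y, Q x & Q y].
pose C := [set v | connect r (node j) v].
have side := bamboo_connect_side e_sym node_inj nodeP bambooP (Q := Q) (a := j).
have QC : {in C, forall v, Q v}.
  have Q_closed : closed r Q by move=> x y /and3P[_]; rewrite !inE => -> ->.
  by move=> v; rewrite inE => /(closed_connect Q_closed); rewrite !inE => <-.
have nQi : ~~ Q (node i) by rewrite inE -leNgt.
have nQl : ~~ Q (node l) by rewrite inE -leNgt.
suff : C = set0 by move/setP/(_ (node j)); rewrite !inE connect0.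
apply: (min_principle negdef QC) => [v vC|v w wC vC evw].
- apply: XM_le0.
    apply/eqP => v_min; move: vC; rewrite v_min inE => /side/(_ Xj nQi).
    by rewrite ij ltn0.
  apply/eqP => v_max; have [l_max|l_max] := eqVneq l ord_max.
    by move: (QC _ vC); rewrite v_max -l_max (negbTE nQl).
  move: vC; rewrite inE v_max => /side/(_ Xj nQl); rewrite ltnNge (ltnW jl) /=.
  have l_lt : (l < k)%N by move: l_max (ltn_ord l); rewrite -val_eqE /=; lia.
  by rewrite l_lt.
- rewrite leNgt; apply: contraNN vC => Xv; have Qw := QC _ wC.
  rewrite inE in wC; rewrite /C inE; apply: connect_trans wC (connect1 _).
  by rewrite /r e_sym evw Qw; exact: Xv.
Qed.

Lemma vfrakE i j : vfrak R e b node i 0 j = Estar R e b (node i) 0 (node j).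
Proof. by rewrite mxE. Qed.

Lemma rsum_vfrak_gt0 i : 0 < rsum (vfrak R e b node i).
Proof.
rewrite /rsum (bigD1 i) //= vfrakE; apply: (lt_le_trans (Estar_diag_gt0 negdef (node i))).
by rewrite lerDl; apply: sumr_ge0 => j _; rewrite vfrakE Estar_ge0.
Qed.

Lemma vfrak_comb_convex (c : 'I_k.+1 -> R) (A B : R) (beta : 'rV[R]_k.+1) :
  (forall i, 0 <= c i) ->
  beta + A *: vfrak R e b node ord0 + B *: vfrak R e b node ord_max
    = \sum_i c i *: vfrak R e b node i ->
  nonneg_convex (beta 0).
Proof.
move=> c_ge0 beta_eq.
pose Es i := Estar R e b (node i).
pose X := \sum_i c i *: Es i - A *: Es ord0 - B *: Es ord_max.
have betaX j : beta 0 j = X 0 (node j).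
  have -> : beta = \sum_i c i *: vfrak R e b node i
      - A *: vfrak R e b node ord0 - B *: vfrak R e b node ord_max.
    by apply/eqP; rewrite eq_sym !subr_eq -beta_eq addrAC.
  rewrite !comb_entry !sum_scale_entry !vfrakE.
  by under eq_bigr do rewrite vfrakE.
have XM_le0 v : v != node ord0 -> v != node ord_max -> (X *m inter_mx R e b) 0 v <= 0.
  move=> v0 vmax; rewrite !mulmxBl mulmx_suml -!scalemxAl !Estar_mulmx //.
  under eq_bigr do rewrite -scalemxAl Estar_mulmx //.
  rewrite comb_entry sum_scale_entry !mxE (negbTE v0) (negbTE vmax) /=.
  rewrite !mulr0n !oppr0 !mulr0 !subr0; under eq_bigr do rewrite !mxE mulrN.
  by rewrite sumrN oppr_le0; apply: sumr_ge0 => i _; rewrite mulr_ge0 ?c_ge0 ?ler0n.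
move=> i j l ijl; rewrite !betaX; exact: nonneg_convex_nodes XM_le0 i j l ijl.
Qed.

End BambooExponents.

Unset Implicit Arguments.

Theorem mainTheorem4 (R : realFieldType) (m k : nat) (e : rel 'I_m)
  (b : 'I_m -> int) (node : 'I_k.+1 -> 'I_m) (l1 lk : R) (alpha : 'rV[R]_k.+1) :
  is_tree e ->
  neg_def (inter_mx R e b) ->
  injective node ->
  (forall v, (3 <= valency e v)%N <-> exists i, node i = v) ->
  (forall i j : 'I_k.+1, orb_adj e (node i) (node j) <-> (i.+1 == j :> nat) || (j.+1 == i :> nat)) ->
  (exists c : 'I_k.+1 -> R, (forall i, 0 <= c i) /\
       alpha = \sum_i c i *: vfrak R e b node i) ->
  (exists z : 'I_m -> int, alpha = \sum_v (z v)%:~R *: projN node (Estar R e b v)) ->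
  0 < l1 -> 0 < lk ->
  forall phip Rp : lpoly R k.+1,
    is_decomp alpha (l1 *: vfrak R e b node ord0) (lk *: vfrak R e b node ord_max) phip Rp ->
    forall beta, lcoef phip beta != 0 ->
      forall n0 : 'I_k.+1, smult beta n0 = 1%N.
Proof.
move=> [e_sym _ _ _] negdef node_inj nodeP bambooP [c [c_ge0 alphaE]] _ l1_gt0 lk_gt0.
move=> phip Rp dec beta beta_exp n0.
have rsum_gt0 i l : 0 < l -> 0 < rsum (l *: vfrak R e b node i).
  by move=> l_gt0; rewrite rsumZ mulr_gt0 // rsum_vfrak_gt0.
have [a [a' beta_eq]] := decomp_exponent_shape (rsum_gt0 _ _ l1_gt0) (rsum_gt0 _ _ lk_gt0) dec beta_exp.
apply: smult_convex; first by case: dec => beta_nneg _ _; exact: beta_nneg.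
have beta_comb : beta + (a.+1%:R * l1) *: vfrak R e b node ord0
    + (a'.+1%:R * lk) *: vfrak R e b node ord_max = \sum_i c i *: vfrak R e b node i.
  by rewrite -alphaE -beta_eq !scalerA.
exact: (vfrak_comb_convex negdef e_sym node_inj nodeP bambooP c_ge0 beta_comb).
Qed.
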